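(* Let $n\in\mathbb{N}$, $t\geq0$, $c\geq1$, and $\mathcal{E}'_n=c\cdot\mathcal{E}_n$. Then $$\mathrm{Diff}_t(\mathcal{E}_n):=\left|\mathrm{Pr}^{\mathcal{E}_n}(\lozenge^{\leq t}g)-\mathrm{Pr}^{\mathcal{E}'_n}(\lozenge^{\leq t}g)\right|=\sum_{k=0}^{n-1}\frac{t^k}{k!}\left(e^{-t}-c^ke^{-ct}\right).$$ If $c>1$, the function $t\mapsto\mathrm{Diff}_t(\mathcal{E}_n)$ has a local maximum at $t=\frac{n\ln(c)}{c-1}$ that is global on $[0,\infty)$.
   Context: The Erlang CTMC $\mathcal{E}_n$ has non-goal states $s_0,\dots,s_{n-1}$ and a goal state $s_n=g$, initial state $s_0$ (for $n=0$ it consists of $g$ only), all $s_0,\dots,s_{n-1}$ carry the same label and $g$ a different one, all exit rates equal $1$, $P(s_i,s_{i+1})=1$ for $0\leq i<n$, and $P(g,g)=1$. (In a CTMC the process stays in state $s$ an exponentially distributed time with rate $E(s)$ and then jumps to $s'$ with probability $P(s,s')$.) $c\cdot\mathcal{E}_n$ is obtained by multiplying all exit rates by $c$. $\mathrm{Pr}^{\mathcal{M}}(\lozenge^{\leq t}g)$ is the probability that $\mathcal{M}$ started in its initial state reaches $g$ within time $t$. *)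

From Stdlib Require Import Reals Lra List Arith.
From Coquelicot Require Import Coquelicot.
Open Scope R_scope.

Definition sumR (n : nat) (f : nat -> R) : R :=
  fold_right Rplus 0 (map f (seq 0 n)).

(* A finite labelled CTMC with states 0 .. nstates-1.
   E s = exit rate of s, P s s' = jump probability, init = initial state,
   goal s = whether s carries the goal label g. *)
Record CTMC := mkCTMC {
  nstates : nat;
  E : nat -> R;
  P : nat -> nat -> R;
  init : nat;
  goal : nat -> bool
}.

(* Probability of reaching a goal state from s within time t using at most
   k jumps (the standard integral characterisation of time-bounded
   reachability in CTMCs, Baier-Haverkort-Hermanns-Katoen 2003, unfolded k
   times). *)
Fixpoint reach_k (M : CTMC) (k : nat) (s : nat) (t : R) : R :=
  if Rlt_dec t 0 then 0 else
  if goal M s then 1 else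
  match k with
  | O => 0
  | S k' =>
      RInt (fun x => E M s * exp (- (E M s) * x) *
                     sumR (nstates M) (fun s' => P M s s' * reach_k M k' s' (t - x)))
           0 t
  end.

(* Pr^M (<>^{<= t} g): the least fixed point, i.e. the limit over the
   number of allowed jumps (the sequence is nondecreasing and bounded). *)
Definition Pr_reach (M : CTMC) (t : R) : R :=
  real (Lim_seq (fun k => reach_k M k (init M) t)).

(* c . E_n : states s_0..s_{n-1} (non-goal), s_n = g (goal), initial s_0,
   every exit rate equal to c, P(s_i, s_{i+1}) = 1, P(g,g) = 1. *)
Definition erlang (c : R) (n : nat) : CTMC :=
  mkCTMC (S n)
    (fun _ => c)
    (fun s s' => if Nat.ltb s n then (if Nat.eqb s' (S s) then 1 else 0)
                 else (if Nat.eqb s' s then 1 else 0))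
    0%nat
    (fun s => Nat.eqb s n).

Definition Diff (c : R) (n : nat) (t : R) : R :=
  Rabs (Pr_reach (erlang 1 n) t - Pr_reach (erlang c n) t).

(* In c.E_n the state s_(n-j) reaches g within time t with probability
   F_j(t) = 1 - e^(-ct) sum_(i<j) (ct)^i/i!, the Erlang(j, c) distribution
   function: unfolding the integral recursion once convolves F_j with the
   Exp(c) density, which gives F_(j+1). Once at least n jumps are allowed the
   k-jump approximation is already exact, so the limit defining Pr_reach is
   trivial. Hence Diff_t = G(t) - G(ct) with G(u) = e^(-u) sum_(k<n) u^k/k!
   the Poisson tail, which is nonincreasing, and this difference expands to
   the stated sum. Its derivative is t^(n-1)/(n-1)! e^(-t) (e^((c-1)(t0-t)) - 1),
   nonnegative before t0 = n ln c / (c - 1) and nonpositive after it. *)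

From Stdlib Require Import Reals List Arith Lra Lia.
From Coquelicot Require Import Coquelicot.
Open Scope R_scope.

Lemma sumR_O f : sumR 0 f = 0.
Proof. reflexivity. Qed.

Lemma sumR_S n f : sumR (S n) f = sumR n f + f n.
Proof.
  unfold sumR. rewrite seq_S, map_app, fold_right_app; simpl.
  induction (map f (seq 0 n)) as [|a l IH]; simpl; lra.
Qed.

Lemma sumR_ext n f g : (forall k, (k < n)%nat -> f k = g k) -> sumR n f = sumR n g.
Proof.
  induction n as [|n IH]; intros Hfg; [reflexivity|].
  rewrite !sumR_S, IH, Hfg; auto.
Qed.

Lemma sumR_indicator n a f : (a < n)%nat ->
  sumR n (fun s => (if Nat.eqb s a then 1 else 0) * f s) = f a.
Proof.
  induction n as [|n IH]; intros Ha; [lia|]. rewrite sumR_S.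
  destruct (Nat.eq_dec a n) as [->|Hne].
  - rewrite Nat.eqb_refl, (sumR_ext _ _ (fun _ => 0)).
    + enough (Hzero : forall N, sumR N (fun _ => 0) = 0) by (rewrite Hzero; lra).
      induction N as [|N IHN]; [reflexivity|]. rewrite sumR_S, IHN. lra.
    + intros k Hk. destruct (Nat.eqb_spec k n); [lia|]. lra.
  - rewrite IH by lia. destruct (Nat.eqb_spec n a); [lia|]. lra.
Qed.

Lemma is_derive_nonneg_le f df a b : a <= b ->
  (forall x, a <= x <= b -> is_derive f x (df x)) ->
  (forall x, a <= x <= b -> 0 <= df x) -> f a <= f b.
Proof.
  intros Hab Hder Hpos.
  destruct (MVT_gen f a b df) as [y [Hy Heq]];
    rewrite ?Rmin_left, ?Rmax_right in * by lra.
  - intros x Hx. apply Hder. lra.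
  - intros x Hx. apply continuity_pt_filterlim, (@ex_derive_continuous R_AbsRing R_NormedModule).
    eexists. apply Hder. lra.
  - assert (0 <= df y * (b - a)) by (apply Rmult_le_pos; [apply Hpos|]; lra). lra.
Qed.

Lemma is_derive_max_at f df a t0 : a <= t0 ->
  (forall x, a <= x -> is_derive f x (df x)) ->
  (forall x, a <= x <= t0 -> 0 <= df x) ->
  (forall x, t0 <= x -> df x <= 0) ->
  forall t, a <= t -> f t <= f t0.
Proof.
  intros Ht0 Hder Hinc Hdec t Ht. destruct (Rle_dec t t0).
  - apply (is_derive_nonneg_le f df); auto.
    + intros x Hx. apply Hder. lra.
    + intros x Hx. apply Hinc. lra.
  - enough (- f t0 <= - f t) by lra.
    apply (is_derive_nonneg_le (fun x => - f x) (fun x => - df x)); [lra| |].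
    + intros x Hx. apply (is_derive_opp f), Hder. lra.
    + intros x Hx. enough (df x <= 0) by lra. apply Hdec. lra.
Qed.

Lemma exp_le_exp_of_le x y : x <= y -> exp x <= exp y.
Proof. intros [Hlt|Heq]; [left; apply exp_increasing; lra|rewrite Heq; lra]. Qed.

Lemma pow_eq_exp_ln c k : 0 < c -> c ^ k = exp (INR k * ln c).
Proof. intros Hc. rewrite <- ln_pow, exp_ln by auto using pow_lt. reflexivity. Qed.

Lemma pow_div_fact_nonneg u k : 0 <= u -> 0 <= u ^ k / INR (fact k).
Proof. intros Hu. apply Rdiv_le_0_compat; [apply pow_le|apply INR_fact_lt_0]; auto. Qed.

Definition exp_partial (j : nat) (u : R) : R := sumR j (fun i => u ^ i / INR (fact i)).

Lemma exp_partial_S j u : exp_partial (S j) u = exp_partial j u + u ^ j / INR (fact j).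
Proof. apply sumR_S. Qed.

Lemma exp_partial_S_0 j : exp_partial (S j) 0 = 1.
Proof.
  induction j as [|j IH]; rewrite exp_partial_S; [|rewrite IH]; simpl; unfold exp_partial;
    rewrite ?sumR_O; lra.
Qed.

Lemma is_derive_exp_partial j u : is_derive (exp_partial (S j)) u (exp_partial j u).
Proof.
  induction j as [|j IH].
  - apply (is_derive_ext (fun _ => 1)).
    + intros t. rewrite exp_partial_S. unfold exp_partial. rewrite sumR_O. simpl. lra.
    + unfold exp_partial. rewrite sumR_O. auto_derive; auto.
  - apply (is_derive_ext (fun t => exp_partial (S j) t + t ^ S j / INR (fact (S j)))).
    { intros t. symmetry. apply exp_partial_S. }
    rewrite exp_partial_S.
    apply (is_derive_plus (exp_partial (S j)) (fun t => t ^ S j / INR (fact (S j)))); auto.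
    auto_derive; [auto|].
    change (match j with 0%nat => 1 | S _ => INR j + 1 end) with (INR (S j)).
    replace (fact j + j * fact j)%nat with (S j * fact j)%nat by (simpl; lia).
    rewrite mult_INR. field. split; [apply INR_fact_neq_0|apply not_0_INR; lia].
Qed.

Lemma ex_derive_exp_partial j u : ex_derive (exp_partial j) u.
Proof.
  destruct j as [|j]; [|eexists; apply is_derive_exp_partial].
  apply (ex_derive_ext (fun _ => 0)); [reflexivity|]. auto_derive; auto.
Qed.

Definition poisson_cdf (j : nat) (u : R) : R := exp (- u) * exp_partial j u.

Lemma is_derive_poisson_cdf m u :
  is_derive (poisson_cdf (S m)) u (- (exp (- u) * (u ^ m / INR (fact m)))).
Proof.
  unfold poisson_cdf. auto_derive; [apply ex_derive_exp_partial|].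
  erewrite is_derive_unique by apply is_derive_exp_partial. rewrite exp_partial_S. ring.
Qed.

Lemma poisson_cdf_nonincreasing j a b : 0 <= a <= b -> poisson_cdf j b <= poisson_cdf j a.
Proof.
  intros Hab. destruct j as [|m].
  - unfold poisson_cdf, exp_partial. rewrite !sumR_O. lra.
  - enough (- poisson_cdf (S m) a <= - poisson_cdf (S m) b) by lra.
    apply (is_derive_nonneg_le (fun u => - poisson_cdf (S m) u)
      (fun u => exp (- u) * (u ^ m / INR (fact m)))); [lra| |].
    + intros x _. rewrite <- Ropp_involutive.
      apply (is_derive_opp (poisson_cdf (S m))), is_derive_poisson_cdf.
    + intros x Hx. apply Rmult_le_pos; [left; apply exp_pos|apply pow_div_fact_nonneg; lra].
Qed.

Lemma RInt_exp_density_poisson_cdf j c t :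
  RInt (fun x => c * exp (- c * x) * (1 - poisson_cdf j (c * (t - x)))) 0 t
  = 1 - poisson_cdf (S j) (c * t).
Proof.
  apply is_RInt_unique.
  set (F x := - exp (- c * x) + exp (- (c * t)) * exp_partial (S j) (c * (t - x))).
  replace (1 - poisson_cdf (S j) (c * t)) with (minus (F t) (F 0)).
  2:{ unfold minus, plus, opp, F, poisson_cdf; simpl.
      rewrite Rminus_diag, Rmult_0_r, exp_partial_S_0, Rminus_0_r, Rmult_0_r, exp_0.
      replace (- c * t) with (- (c * t)) by ring. lra. }
  apply (is_RInt_derive F).
  - intros x _. unfold F, poisson_cdf. auto_derive; [apply ex_derive_exp_partial|].
    rewrite (is_derive_unique _ _ _ (is_derive_exp_partial j _)).
    replace (- (c * t)) with (- c * x + - (c * (t - x))) by ring.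
    rewrite exp_plus. replace (t + - x) with (t - x) by ring. ring.
  - intros x _. apply (@ex_derive_continuous R_AbsRing R_NormedModule).
    unfold poisson_cdf. auto_derive. apply ex_derive_exp_partial.
Qed.

Definition erlang_cdf (c : R) (j : nat) (t : R) : R :=
  if Rlt_dec t 0 then 0 else 1 - poisson_cdf j (c * t).

Lemma reach_k_erlang c n j : (j <= n)%nat -> forall m t,
  reach_k (erlang c n) (m + j) (n - j) t = erlang_cdf c j t.
Proof.
  induction j as [|j IH]; intros Hj m t; unfold erlang_cdf.
  - rewrite Nat.add_0_r, Nat.sub_0_r.
    destruct m; simpl; destruct (Rlt_dec t 0); rewrite ?Nat.eqb_refl; try reflexivity;
      unfold poisson_cdf, exp_partial; rewrite sumR_O; ring.
  - rewrite Nat.add_succ_r. simpl reach_k. destruct (Rlt_dec t 0); [reflexivity|].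
    replace (n - S j =? n)%nat with false by (symmetry; apply Nat.eqb_neq; lia).
    replace (n - S j <? n)%nat with true by (symmetry; apply Nat.ltb_lt; lia).
    rewrite <- RInt_exp_density_poisson_cdf.
    apply RInt_ext. intros x Hx. rewrite Rmin_left, Rmax_right in Hx by lra.
    rewrite sumR_indicator by lia.
    replace (S (n - S j)) with (n - j)%nat by lia.
    rewrite IH by lia. unfold erlang_cdf. destruct (Rlt_dec (t - x) 0); [lra|]. reflexivity.
Qed.

Lemma Pr_reach_erlang c n t : Pr_reach (erlang c n) t = erlang_cdf c n t.
Proof.
  unfold Pr_reach. rewrite <- (Lim_seq_incr_n _ n).
  rewrite (Lim_seq_ext _ (fun _ => erlang_cdf c n t)), Lim_seq_const; [reflexivity|].
  intros k. simpl init. replace 0%nat with (n - n)%nat at 1 by lia.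
  apply reach_k_erlang. lia.
Qed.

Lemma Diff_poisson_cdf c n t : 1 <= c -> 0 <= t ->
  Diff c n t = poisson_cdf n t - poisson_cdf n (c * t).
Proof.
  intros Hc Ht. unfold Diff. rewrite !Pr_reach_erlang. unfold erlang_cdf.
  destruct (Rlt_dec t 0); [lra|]. rewrite Rmult_1_l, Rabs_minus_sym, Rabs_right; [ring|].
  assert (poisson_cdf n (c * t) <= poisson_cdf n t)
    by (apply poisson_cdf_nonincreasing; nra).
  lra.
Qed.

Lemma poisson_cdf_sub_scale n c t :
  poisson_cdf n t - poisson_cdf n (c * t)
  = sumR n (fun k => t ^ k / INR (fact k) * (exp (- t) - c ^ k * exp (- (c * t)))).
Proof.
  unfold poisson_cdf. induction n as [|n IH].
  - unfold exp_partial. rewrite !sumR_O. ring.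
  - rewrite sumR_S, <- IH, !exp_partial_S, Rpow_mult_distr.
    field. apply INR_fact_neq_0.
Qed.

Lemma is_derive_poisson_cdf_sub_scale m c t :
  is_derive (fun t => poisson_cdf (S m) t - poisson_cdf (S m) (c * t)) t
    (t ^ m / INR (fact m) * (c ^ S m * exp (- (c * t)) - exp (- t))).
Proof.
  auto_derive.
  - repeat split; eexists; apply is_derive_poisson_cdf.
  - rewrite !(is_derive_unique _ _ _ (is_derive_poisson_cdf m _)), Rpow_mult_distr.
    simpl pow. field. apply INR_fact_neq_0.
Qed.

Lemma scaled_ln_div_nonneg k c : 1 < c -> 0 <= INR k * ln c / (c - 1).
Proof.
  intros Hc. assert (0 < ln c) by (rewrite <- ln_1; apply ln_increasing; lra).
  apply Rdiv_le_0_compat; [apply Rmult_le_pos; [apply pos_INR|]|]; lra.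
Qed.

Lemma pow_exp_sub_exp c k t : 1 < c ->
  c ^ k * exp (- (c * t)) - exp (- t)
  = exp (- t) * (exp ((c - 1) * (INR k * ln c / (c - 1) - t)) - 1).
Proof.
  intros Hc. rewrite pow_eq_exp_ln by lra.
  replace ((c - 1) * (INR k * ln c / (c - 1) - t)) with (INR k * ln c + - (c * t) + t)
    by (field; lra).
  rewrite !exp_plus, (exp_Ropp t). field. apply Rgt_not_eq, exp_pos.
Qed.

Lemma pow_exp_sub_exp_nonneg c k t : 1 < c -> t <= INR k * ln c / (c - 1) ->
  0 <= c ^ k * exp (- (c * t)) - exp (- t).
Proof.
  intros Hc Ht. rewrite pow_exp_sub_exp by lra.
  pose proof (exp_le_exp_of_le 0 _ (Rmult_le_pos (c - 1) (INR k * ln c / (c - 1) - t) ltac:(lra) ltac:(lra))) as Hge.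
  rewrite exp_0 in Hge. apply Rmult_le_pos; [left; apply exp_pos|lra].
Qed.

Lemma pow_exp_sub_exp_nonpos c k t : 1 < c -> INR k * ln c / (c - 1) <= t ->
  c ^ k * exp (- (c * t)) - exp (- t) <= 0.
Proof.
  intros Hc Ht. rewrite pow_exp_sub_exp by lra.
  pose proof (exp_le_exp_of_le _ 0 (Rmult_le_0_l (c - 1) (INR k * ln c / (c - 1) - t) ltac:(lra) ltac:(lra))) as Hle.
  rewrite exp_0 in Hle. apply Rmult_le_0_l; [left; apply exp_pos|lra].
Qed.

Lemma poisson_cdf_sub_scale_max n c t : 1 < c -> 0 <= t ->
  let t0 := INR n * ln c / (c - 1) in
  poisson_cdf n t - poisson_cdf n (c * t) <= poisson_cdf n t0 - poisson_cdf n (c * t0).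
Proof.
  intros Hc Ht t0. destruct n as [|m].
  { unfold poisson_cdf, exp_partial. rewrite !sumR_O. lra. }
  apply (is_derive_max_at (fun t => poisson_cdf (S m) t - poisson_cdf (S m) (c * t))
           (fun x => x ^ m / INR (fact m) * (c ^ S m * exp (- (c * x)) - exp (- x))) 0 t0);
    [apply scaled_ln_div_nonneg, Hc|intros; apply is_derive_poisson_cdf_sub_scale| | |exact Ht].
  - intros x Hx. apply Rmult_le_pos.
    + apply pow_div_fact_nonneg. lra.
    + apply pow_exp_sub_exp_nonneg; [exact Hc|apply Hx].
  - intros x Hx. pose proof (scaled_ln_div_nonneg (S m) c Hc). apply Rmult_le_0_l.
    + apply pow_div_fact_nonneg. unfold t0 in Hx. lra.
    + apply pow_exp_sub_exp_nonpos; [exact Hc|exact Hx].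
Qed.

Theorem proposition4 (n : nat) (c : R) (hc : 1 <= c) :
  (forall t : R, 0 <= t ->
     Diff c n t =
     sumR n (fun k => t ^ k / INR (fact k) * (exp (- t) - c ^ k * exp (- (c * t)))))
  /\
  (1 < c ->
     let t0 := INR n * ln c / (c - 1) in
     (exists eps : R, 0 < eps /\
        forall t : R, 0 <= t -> Rabs (t - t0) < eps -> Diff c n t <= Diff c n t0)
     /\ (forall t : R, 0 <= t -> Diff c n t <= Diff c n t0)).
Proof.
  split.
  - intros t Ht. rewrite Diff_poisson_cdf, poisson_cdf_sub_scale; auto.
  - intros Hc t0.
    assert (Ht0 : 0 <= t0) by exact (scaled_ln_div_nonneg n c Hc).
    assert (Hglobal : forall t, 0 <= t -> Diff c n t <= Diff c n t0).
    { intros t Ht. rewrite !Diff_poisson_cdf by lra.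
      apply poisson_cdf_sub_scale_max; lra. }
    split; [exists 1; split; [lra|]|]; auto.
Qed.
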